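(* Let ${\mathcal M}:{\mathbb E}\to{\mathbb F}$ be a linear map between finite-dimensional Euclidean spaces, $\mathcal{K}\subseteq{\mathbb E}$ a convex cone, $b\in{\mathbb F}$, and ${\mathcal F}=\{X\in\mathcal{K}:{\mathcal M}(X)=b\}$ (assumed nonempty). Let $v_1,\dots,v_r\in b^{\perp}$ satisfy $v_1\in{\mathcal M}(\mathcal{K})^*$ and $v_i\in\big({\mathcal M}(\mathcal{K})\cap v_1^{\perp}\cap\cdots\cap v_{i-1}^{\perp}\big)^*$ for $i=2,\dots,r$. Put $N={\mathcal M}(\mathcal{K})\cap v_1^\perp\cap\cdots\cap v_r^\perp$ and $E=\mathcal{K}\cap({\mathcal M}^*v_1)^\perp\cap\cdots\cap({\mathcal M}^*v_r)^\perp$. Then: (1) for each $i$, $v_i$ exposes a face of ${\mathcal M}(\mathcal{K})\cap v_1^\perp\cap\cdots\cap v_{i-1}^\perp$ containing $b$, and ${\mathcal M}^*v_i$ exposes a face of $\mathcal{K}\cap({\mathcal M}^*v_1)^\perp\cap\cdots\cap({\mathcal M}^*v_{i-1})^\perp$ containing ${\mathcal F}$; (2) $N$ is a face of ${\mathcal M}(\mathcal{K})$ containing $b$, and $E$ is a face of $\mathcal{K}$ containing ${\mathcal F}$; (3) $N=\operatorname{face}(b,{\mathcal M}(\mathcal{K}))$ if and only if $E=\operatorname{face}({\mathcal F},\mathcal{K})$.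
   Context: $\operatorname{face}(S,C)$ denotes the smallest face of the cone $C$ containing the set $S$ (intersection of all faces containing $S$). $S^*$ is the dual cone, $v^\perp$ the orthogonal complement of $\{v\}$. A vector $w$ in the dual of a cone $C$ exposes the face $C\cap w^\perp$. *)

(* Euclidean spaces are modelled as row vectors 'rV[R]_n over
   a real number type R with the standard inner product. *)
From mathcomp Require Import all_boot all_order all_algebra.
From mathcomp Require Import reals.
Set Implicit Arguments. Unset Strict Implicit. Unset Printing Implicit Defensive.
Import Order.TTheory GRing.Theory Num.Theory.
Local Open Scope ring_scope.

Section Defs.
Variable R : realType.

Definition dotv n (x y : 'rV[R]_n) : R := (x *m y^T) 0 0.

Definition orth n (w : 'rV[R]_n) : 'rV[R]_n -> Prop := fun x => dotv x w = 0.

Definition setI_ n (A B : 'rV[R]_n -> Prop) : 'rV[R]_n -> Prop :=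
  fun x => A x /\ B x.

Definition subset_ n (A B : 'rV[R]_n -> Prop) : Prop := forall x, A x -> B x.

Definition seteq n (A B : 'rV[R]_n -> Prop) : Prop := forall x, A x <-> B x.

Definition dual n (S : 'rV[R]_n -> Prop) : 'rV[R]_n -> Prop :=
  fun w => forall x, S x -> 0 <= dotv x w.

Definition convex_set n (C : 'rV[R]_n -> Prop) : Prop :=
  forall x y (t : R), C x -> C y -> 0 <= t <= 1 -> C ((1 - t) *: x + t *: y).

Definition convex_cone n (K : 'rV[R]_n -> Prop) : Prop :=
  (forall x y, K x -> K y -> K (x + y)) /\
  (forall (a : R) x, 0 < a -> K x -> K (a *: x)).

Definition is_face n (F C : 'rV[R]_n -> Prop) : Prop :=
  subset_ F C /\ convex_set F /\
  forall x y (t : R), C x -> C y -> 0 < t < 1 ->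
    F ((1 - t) *: x + t *: y) -> F x /\ F y.

Definition face_of n (S C : 'rV[R]_n -> Prop) : 'rV[R]_n -> Prop :=
  fun x => forall F, is_face F C -> subset_ S F -> F x.

Definition exposes n (w : 'rV[R]_n) (C G : 'rV[R]_n -> Prop) : Prop :=
  dual C w /\ seteq G (setI_ C (orth w)) /\ is_face G C.

Definition lin_image n m (M : 'M[R]_(n, m)) (K : 'rV[R]_n -> Prop) : 'rV[R]_m -> Prop :=
  fun y => exists x, K x /\ y = x *m M.

(* adjoint M^* v = v *m M^T, so that <x *m M, v> = <x, v *m M^T> *)
Definition adj n m (M : 'M[R]_(n, m)) (v : 'rV[R]_m) : 'rV[R]_n := v *m M^T.

Definition Nk n m (M : 'M[R]_(n, m)) (K : 'rV[R]_n -> Prop)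
  (v : nat -> 'rV[R]_m) (k : nat) : 'rV[R]_m -> Prop :=
  fun y => lin_image M K y /\ forall j, (j < k)%N -> dotv y (v j) = 0.

Definition Ek n m (M : 'M[R]_(n, m)) (K : 'rV[R]_n -> Prop)
  (v : nat -> 'rV[R]_m) (k : nat) : 'rV[R]_n -> Prop :=
  fun x => K x /\ forall j, (j < k)%N -> dotv x (adj M (v j)) = 0.

Definition feas n m (M : 'M[R]_(n, m)) (K : 'rV[R]_n -> Prop) (b : 'rV[R]_m)
  : 'rV[R]_n -> Prop := fun x => K x /\ x *m M = b.

End Defs.

From mathcomp Require Import all_boot all_order all_algebra.
From mathcomp Require Import reals.
From mathcomp Require Import ring lra.
Import Order.TTheory GRing.Theory Num.Theory.
Local Open Scope ring_scope.
Set Implicit Arguments. Unset Strict Implicit. Unset Printing Implicit Defensive.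

(** The slices [N_k] and [E_k] are obtained from the convex sets [M(K)] and [K]
  by intersecting successively with supporting hyperplanes, so each is a face
  of the previous one and hence of the original set; and [M^* v_i] supports
  [E_i] because [<x, M^* v_i> = <M x, v_i>]. Moreover [E_k] is exactly the
  preimage of [N_k] in [K]. For (3), the minimal face of [b] in a convex set
  [C] is [{y in C | b + e (b - y) in C for some e > 0}]. If [N] is this face
  and [x] lies in the preimage [E], then [b] is an interior point of a segment
  from [M x] to some [M z] with [z] in [K]; the same segment from [x] to [z]
  meets the feasible set, so any face of [K] containing the feasible set
  contains [x]. Conversely, preimages of faces of [M(K)] are faces of [K]. *)

Section Faces.
Variables (R : realType) (n : nat).
Implicit Types (C F G : 'rV[R]_n -> Prop) (b d w x y : 'rV[R]_n)
  (u : nat -> 'rV[R]_n).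

Lemma dotvDl x y w : dotv (x + y) w = dotv x w + dotv y w.
Proof. by rewrite /dotv mulmxDl mxE. Qed.

Lemma dotvZl (a : R) x w : dotv (a *: x) w = a * dotv x w.
Proof. by rewrite /dotv -scalemxAl mxE. Qed.

Lemma orth_comb w x y (t : R) :
  orth w x -> orth w y -> orth w ((1 - t) *: x + t *: y).
Proof. by rewrite /orth dotvDl !dotvZl => -> ->; rewrite !mulr0 addr0. Qed.

Lemma cone_convex C : convex_cone C -> convex_set C.
Proof.
move=> [CD CZ] x y t Cx Cy /andP[t_ge0 t_le1].
have [->|t_neq0] := eqVneq t 0; first by rewrite subr0 scale1r scale0r addr0.
have [->|t_neq1] := eqVneq t 1; first by rewrite subrr scale0r add0r scale1r.
apply: CD; apply: CZ => //; first by rewrite subr_gt0 lt_neqAle t_neq1.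
by rewrite lt_neqAle eq_sym t_neq0.
Qed.

Lemma face_refl C : convex_set C -> is_face C C.
Proof. by move=> cC; split=> //; split=> // x y t _ _ _. Qed.

Lemma is_face_ext C F G : seteq F G -> is_face F C -> is_face G C.
Proof.
move=> FG [FC [cF eF]]; split; first by move=> x /FG /FC.
split; first by move=> x y t /FG Fx /FG Fy t01; apply/FG; exact: cF.
by move=> x y t Cx Cy t01 /FG /(eF x y t Cx Cy t01) [/FG Gx /FG Gy].
Qed.

Lemma face_trans C F G : is_face F C -> is_face G F -> is_face G C.
Proof.
move=> [FC [_ eF]] [GF [cG eG]]; split; first by move=> x /GF /FC.
split=> // x y t Cx Cy t01 Gz.
have [Fx Fy] := eF x y t Cx Cy t01 (GF _ Gz).
exact: eG Fx Fy t01 Gz.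
Qed.

Lemma exposed_face C w :
  convex_set C -> dual C w -> exposes w C (setI_ C (orth w)).
Proof.
move=> cC Cw; split=> //; split; first by move=> x; split.
split; first by move=> x [].
split=> [x y t [Cx xw] [Cy yw] t01|x y t Cx Cy /andP[t_gt0 t_lt1] [_]].
  by split; [exact: cC | exact: orth_comb].
rewrite /orth dotvDl !dotvZl => comb0.
by have := Cw x Cx; have := Cw y Cy; split; split=> //; nra.
Qed.

Definition slice C (u : nat -> 'rV[R]_n) k x :=
  C x /\ forall j, (j < k)%N -> dotv x (u j) = 0.

Lemma slice_convex C u k : convex_set C -> convex_set (slice C u k).
Proof.
move=> cC x y t [Cx xw] [Cy yw] t01; split; first exact: cC.
by move=> j jk; apply: orth_comb; [exact: xw | exact: yw].
Qed.

Lemma sliceS C u k x :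
  slice C u k.+1 x <-> setI_ (slice C u k) (orth (u k)) x.
Proof.
split=> [[Cx xw]|[[Cx xw] xwk]].
  by split; [split=> // j jk; apply: xw; exact: leqW | exact: xw].
by split=> // j; rewrite ltnS leq_eqVlt => /orP[/eqP->|/xw].
Qed.

Lemma slice_face C u k : convex_set C ->
  (forall j, (j < k)%N -> dual (slice C u j) (u j)) -> is_face (slice C u k) C.
Proof.
move=> cC; elim: k => [_|k IH dual_u].
  by apply: is_face_ext (face_refl cC) => x; split=> [Cx|[]//]; split.
apply: face_trans (IH (fun j jk => dual_u j (leqW jk))) _.
apply: is_face_ext (fun x => iff_sym (sliceS C u k x)) _.
exact: (exposed_face (slice_convex (u := u) (k := k) cC) (dual_u k (ltnSn k))).2.2.
Qed.

Definition minface C b y := C y /\ exists2 e : R, 0 < e & C (b + e *: (b - y)).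

Lemma minface_b C b : C b -> minface C b b.
Proof. by move=> Cb; split=> //; exists 1; rewrite ?subrr ?scaler0 ?addr0. Qed.

Lemma ratio_in01 (e : R) : 0 < e -> 0 < e / (1 + e) < 1.
Proof.
move=> e_gt0; apply/andP; split; first by apply: divr_gt0; lra.
by rewrite ltr_pdivrMr; lra.
Qed.

Lemma ray_decomp (e : R) b y : 0 < e ->
  b = (1 - e / (1 + e)) *: (b + e *: (b - y)) + (e / (1 + e)) *: y.
Proof.
move=> e_gt0; have e1_neq0 : 1 + e != 0 by apply: lt0r_neq0; lra.
by apply/rowP => j; rewrite !mxE; field.
Qed.

Lemma convex_ray C b d (e e' : R) : convex_set C -> C b ->
  C (b + e *: d) -> 0 < e' <= e -> C (b + e' *: d).
Proof.
move=> cC Cb Cbd /andP[e'_gt0 e'_le].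
have e_neq0 : e != 0 by apply: lt0r_neq0; lra.
have -> : b + e' *: d = (1 - e' / e) *: b + (e' / e) *: (b + e *: d).
  by apply/rowP => j; rewrite !mxE; field.
apply: cC => //; apply/andP; split; first by apply: divr_ge0; lra.
by rewrite ler_pdivrMr; lra.
Qed.

Lemma minface_convex C b : convex_set C -> C b -> convex_set (minface C b).
Proof.
move=> cC Cb y1 y2 t [Cy1 [e1 e1_gt0 C1]] [Cy2 [e2 e2_gt0 C2]] t01.
split; first exact: cC.
set e := Order.min e1 e2.
have e_gt0 : 0 < e by rewrite /e lt_min e1_gt0.
exists e => //.
have -> : b + e *: (b - ((1 - t) *: y1 + t *: y2)) =
    (1 - t) *: (b + e *: (b - y1)) + t *: (b + e *: (b - y2)).
  by apply/rowP => j; rewrite !mxE; ring.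
by apply: (cC) => //; [apply: (convex_ray (e := e1)) | apply: (convex_ray (e := e2))];
  rewrite // e_gt0 /e ge_min lexx ?orbT.
Qed.

(** [b + e (1 - t) / (1 + e t) (b - x)] is the convex combination of
  [b + e (b - ((1 - t) x + t y))] and [y] with weights [1 : e t]. *)
Lemma minface_extremal C b x y (t : R) : convex_set C -> C x -> C y ->
  0 < t < 1 -> minface C b ((1 - t) *: x + t *: y) -> minface C b x.
Proof.
move=> cC Cx Cy /andP[t_gt0 t_lt1] [_ [e e_gt0 Cz]]; split=> //.
have et_gt0 : 0 < e * t by apply: mulr_gt0.
have et1_neq0 : 1 + e * t != 0 by apply: lt0r_neq0; lra.
exists (e * (1 - t) / (1 + e * t)).
  by apply: divr_gt0; [apply: mulr_gt0; lra | lra].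
set s := e * t / (1 + e * t).
have -> : b + (e * (1 - t) / (1 + e * t)) *: (b - x) =
    (1 - s) *: (b + e *: (b - ((1 - t) *: x + t *: y))) + s *: y.
  by apply/rowP => j; rewrite !mxE /s; field.
by apply: cC => //; case/andP: (ratio_in01 et_gt0) => /ltW-> /ltW->.
Qed.

Lemma minface_face C b : convex_set C -> C b -> is_face (minface C b) C.
Proof.
move=> cC Cb; split; first by move=> y [].
split; first exact: minface_convex.
move=> x y t Cx Cy t01 bz; split; first exact: minface_extremal bz.
have t01' : 0 < 1 - t < 1 by case/andP: t01 => *; apply/andP; split; lra.
by apply: minface_extremal cC Cy Cx t01' _; rewrite subKr addrC.
Qed.

End Faces.

Section LinearImage.
Variables (R : realType) (n m : nat) (M : 'M[R]_(n, m)).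

Lemma dotv_adj (x : 'rV[R]_n) v : dotv (x *m M) v = dotv x (adj M v).
Proof. by rewrite /dotv /adj trmx_mul trmxK mulmxA. Qed.

Lemma lin_image_convex K : convex_set K -> convex_set (lin_image M K).
Proof.
move=> cK _ _ t [x [Kx ->]] [y [Ky ->]] t01; exists ((1 - t) *: x + t *: y).
by split; [exact: cK | rewrite mulmxDl -!scalemxAl].
Qed.

Lemma preimage_face K H : convex_set K -> is_face H (lin_image M K) ->
  is_face (fun x => K x /\ H (x *m M)) K.
Proof.
move=> cK [_ [cH eH]]; split; first by move=> x [].
split=> [x y t [Kx Hx] [Ky Hy] t01|x y t Kx Ky t01 [_]].
  by split; [exact: cK | rewrite mulmxDl -!scalemxAl; exact: cH].
rewrite mulmxDl -!scalemxAl => Hz.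
have Mx : lin_image M K (x *m M) by exists x.
have My : lin_image M K (y *m M) by exists y.
by have [] := eH _ _ _ Mx My t01 Hz; split; split.
Qed.

Lemma Ek_preimage K (v : nat -> 'rV[R]_m) k x :
  Ek M K v k x <-> K x /\ Nk M K v k (x *m M).
Proof.
split=> [[Kx xv]|[Kx [_ xv]]]; split=> //.
  by split=> [|j jk]; [exists x | rewrite dotv_adj; exact: xv].
by move=> j jk; rewrite -dotv_adj; exact: xv.
Qed.

Lemma dual_Ek K (v : nat -> 'rV[R]_m) k :
  dual (Nk M K v k) (v k) -> dual (Ek M K v k) (adj M (v k)).
Proof. by move=> dual_v x /Ek_preimage[_ Nx]; rewrite -dotv_adj; exact: dual_v. Qed.

Section Preimage.
Variables (K : 'rV[R]_n -> Prop) (N : 'rV[R]_m -> Prop) (E : 'rV[R]_n -> Prop).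
Variable b : 'rV[R]_m.
Hypothesis cK : convex_set K.
Hypothesis faceN : is_face N (lin_image M K).
Hypothesis Nb : N b.
Hypothesis E_preimage : forall x, E x <-> K x /\ N (x *m M).

Lemma face_preimage : is_face E K.
Proof.
apply: is_face_ext (preimage_face cK faceN) => x.
exact: iff_sym (E_preimage x).
Qed.

Lemma feas_sub_preimage : subset_ (feas M K b) E.
Proof. by move=> x [Kx xb]; apply/E_preimage; rewrite xb. Qed.

Lemma minimal_face_preimage :
  seteq N (face_of (fun y => y = b) (lin_image M K)) ->
  seteq E (face_of (feas M K b) K).
Proof.
move=> Nmin x; split; last first.
  by move=> Ex; apply: Ex face_preimage feas_sub_preimage.
move=> /E_preimage[Kx Nx] G faceG feasG.
have cMK := lin_image_convex cK.
have [_ [e e_gt0 [z [Kz ez]]]] : minface (lin_image M K) b (x *m M).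
  have MKb := faceN.1 b Nb.
  apply: ((Nmin (x *m M)).1 Nx _ (minface_face cMK MKb)) => _ ->.
  exact: minface_b.
have t01 := ratio_in01 e_gt0.
have Gp : G ((1 - e / (1 + e)) *: z + (e / (1 + e)) *: x).
  apply: feasG; split; first by apply: cK => //; case/andP: t01 => /ltW-> /ltW->.
  by rewrite mulmxDl -!scalemxAl -ez -ray_decomp.
exact: (faceG.2.2 _ _ _ Kz Kx t01 Gp).2.
Qed.

Lemma minimal_face_image :
  seteq E (face_of (feas M K b) K) ->
  seteq N (face_of (fun y => y = b) (lin_image M K)).
Proof.
move=> Emin y; split; last by move=> Ny; apply: (Ny N faceN) => _ ->.
move=> Ny H faceH bH; have [x [Kx yx]] := faceN.1 y Ny.
have Ex : E x by apply/E_preimage; rewrite -yx.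
suff [_] : K x /\ H (x *m M) by rewrite yx.
apply: ((Emin x).1 Ex _ (preimage_face cK faceH)) => z [Kz zb]; split=> //.
by rewrite zb; exact: bH.
Qed.

End Preimage.

End LinearImage.

Theorem mainTheorem5 (R : realType) (n m : nat) (M : 'M[R]_(n, m))
  (K : 'rV[R]_n -> Prop) (b : 'rV[R]_m) (r : nat) (v : nat -> 'rV[R]_m) :
  convex_cone K ->
  (exists x, feas M K b x) ->
  (forall i, (i < r)%N -> dotv b (v i) = 0) ->
  (forall i, (i < r)%N -> dual (Nk M K v i) (v i)) ->
  (* (1) *)
  (forall i, (i < r)%N ->
     (exposes (v i) (Nk M K v i) (setI_ (Nk M K v i) (orth (v i))) /\
      setI_ (Nk M K v i) (orth (v i)) b) /\
     (exposes (adj M (v i)) (Ek M K v i) (setI_ (Ek M K v i) (orth (adj M (v i)))) /\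
      subset_ (feas M K b) (setI_ (Ek M K v i) (orth (adj M (v i)))))) /\
  (* (2) *)
  (is_face (Nk M K v r) (lin_image M K) /\ Nk M K v r b /\
   is_face (Ek M K v r) K /\ subset_ (feas M K b) (Ek M K v r)) /\
  (* (3) *)
  (seteq (Nk M K v r) (face_of (fun y => y = b) (lin_image M K)) <->
   seteq (Ek M K v r) (face_of (feas M K b) K)).
Proof.
move=> coneK [x0 [Kx0 x0b]] v_b dual_v.
have cK := cone_convex coneK.
have cMK : convex_set (lin_image M K) := lin_image_convex cK.
have Nk_b k : (k <= r)%N -> Nk M K v k b.
  by move=> kr; split=> [|j jk]; [exists x0 | apply: v_b; exact: leq_trans jk kr].
split=> [i ir|].
  have Nib := Nk_b i (ltnW ir).
  split; split.
  - exact: exposed_face (slice_convex cMK) (dual_v i ir).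
  - by split=> //; exact: v_b.
  - have cEi := slice_convex (u := fun j => adj M (v j)) (k := i) cK.
    exact: exposed_face cEi (dual_Ek (dual_v i ir)).
  - move=> x fx; split; first exact: feas_sub_preimage Nib (Ek_preimage M K v i) x fx.
    by rewrite /orth -dotv_adj fx.2; exact: v_b.
have faceN : is_face (Nk M K v r) (lin_image M K).
  by apply: slice_face => // j jr; exact: dual_v.
have Nb := Nk_b r (leqnn r).
have Ek_r := Ek_preimage M K v r.
split; first do 3 split=> //.
- exact: face_preimage cK faceN Ek_r.
- exact: feas_sub_preimage Nb Ek_r.
split; first exact: minimal_face_preimage cK faceN Nb Ek_r.
exact: minimal_face_image cK faceN Nb Ek_r.
Qed.
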